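(* Fix real parameters $\ell>0$, $\ell_0\in(0,\ell)$, $\rho>0$, $I_\rho>0$, $EI>0$, $K>0$, $m>0$, $\varkappa>0$, $d>0$. Let $s\in\mathbb{C}$ be such that $K+I_\rho s^2\neq 0$, $b\neq 0$, $a^2\neq b$ (with $a,b$ as in the context), and such that the $4\times 4$ matrix $M=M(s)$ defined in the context is invertible; write $M^{-1}=(M^{-1}_{ij})_{i,j=1}^4$. Let $U\in\mathbb{C}$. Suppose $W,\Psi:[0,\ell]\to\mathbb{C}$ are such that their restrictions to $[0,\ell_0]$ and to $[\ell_0,\ell]$ are twice continuously differentiable (derivatives at $\ell_0$ understood one-sidedly, denoted by arguments $\ell_0-0$ and $\ell_0+0$), and they satisfy on $(0,\ell_0)$ and on $(\ell_0,\ell)$ $$K\big(W''(x)-\Psi'(x)\big)-\rho s^2 W(x)=0,\qquad EI\,\Psi''(x)+K\big(W'(x)-\Psi(x)\big)-I_\rho s^2\Psi(x)=0,$$ together with the boundary conditions $W(0)=W(\ell)=0$, $\Psi'(0)=\Psi'(\ell)=0$ and the interface conditions $$W(\ell_0-0)=W(\ell_0+0),\quad \Psi(\ell_0-0)=\Psi(\ell_0+0),\quad \Psi'(\ell_0-0)=\Psi'(\ell_0+0),$$ $$K\big(W'(\ell_0-0)-W'(\ell_0+0)\big)+(ms^2+\varkappa+ds)\,W(\ell_0)=U.$$ Then for every $\ell_k\in[0,\ell]$ one has $W(\ell_k)=H_1(s)\,U$ and $\Psi'(\ell_k)=H_2(s)\,U$, where $$H_1(s)=\begin{cases}\frac1K\Big(z_2(\ell_k,s)M^{-1}_{14}+z_4(\ell_k,s)M^{-1}_{24}\Big),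 & \ell_k\in[0,\ell_0],\\[4pt] \frac1K\Big(z_2(\ell_k-\ell,s)M^{-1}_{34}+z_4(\ell_k-\ell,s)M^{-1}_{44}\Big), & \ell_k\in(\ell_0,\ell],\end{cases}$$ $$H_2(s)=\begin{cases}\frac1{K^2}\Big[\big(-\lambda_1^2\lambda_2^2K z_4(\ell_k,s)-\rho s^2 z_2(\ell_k,s)\big)M^{-1}_{14}+\big(Kz_5(\ell_k,s)-\rho s^2 z_4(\ell_k,s)\big)M^{-1}_{24}\Big], & \ell_k\in[0,\ell_0],\\[4pt] \frac1{K^2}\Big[\big(-\lambda_1^2\lambda_2^2K z_4(\ell_k-\ell,s)-\rho s^2 z_2(\ell_k-\ell,s)\big)M^{-1}_{34}+\big(Kz_5(\ell_k-\ell,s)-\rho s^2 z_4(\ell_k-\ell,s)\big)M^{-1}_{44}\Big], & \ell_k\in(\ell_0,\ell].\end{cases}$$ In other words, $H_1$ and $H_2$ are the transfer functions of the damped Timoshenko beam with attached mass (input: the force $F_0$ at $\ell_0$; outputs: the displacement $w(\ell_k,t)$, resp. the mechanical curvature $\psi'(\ell_k,t)$).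
   Context: This is the Laplace transform (zero initial data, Laplace variable $s$) of the simply supported Timoshenko beam system $\rho\ddot w-K(w''-\psi')=0$, $I_\rho\ddot\psi-EI\psi''-K(w'-\psi)=0$ on $[0,\ell]$, with $w(0,t)=w(\ell,t)=0$, $\psi'(0,t)=\psi'(\ell,t)=0$, continuity of $w,\psi,\psi'$ at $\ell_0$, and $F_0-m\ddot w(\ell_0,t)-\varkappa w(\ell_0,t)-d\dot w(\ell_0,t)-K(w'(\ell_0-0,t)-w'(\ell_0+0,t))=0$; here $W,\Psi,U$ are the Laplace transforms of $w,\psi,F_0$. Parameters: $\rho$ linear density, $I_\rho$ mass moment of inertia of the cross-section, $EI$ bending stiffness, $K=kGA$ shear stiffness, $m$ attached mass, $\varkappa$ spring stiffness, $d$ damping coefficient. Primes denote derivatives in $x$. Notation: $a=\frac{s^2}{2}\big(\frac{\rho}{K}+\frac{I_\rho}{EI}\big)$, $b=\frac{(K+I_\rho s^2)\rho s^2}{K\,EI}$, $\lambda_1=\sqrt{a+\sqrt{a^2-b}}$, $\lambda_2=\sqrt{a-\sqrt{a^2-b}}$ (principal square roots), so that $\lambda_1^2\lambda_2^2=b$. For $x\in\mathbb{R}$: $z_1(x,s)=\lambda_1^2\cosh\lambda_2x-\lambda_2^2\cosh\lambda_1x$, $z_2(x,s)=\frac{1}{\lambda_1\lambda_2}(\lambda_1^3\sinh\lambda_2x-\lambda_2^3\sinh\lambda_1x)$, $z_3(x,s)=\cosh\lambda_1x-\cosh\lambda_2x$, $z_4(x,s)=\frac{1}{\lambda_1\lambda_2}(\lambda_2\sinh\lambda_1x-\lambda_1\sinh\lambda_2x)$,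 $z_5(x,s)=\lambda_1\sinh\lambda_1x-\lambda_2\sinh\lambda_2x$, $z_6(x,s)=\lambda_1^2\cosh\lambda_1x-\lambda_2^2\cosh\lambda_2x$. Further $v=\frac{K}{EI}-\frac{\rho s^2}{K}$, $v_1=\frac{\rho s^2}{K}$, $v_2=\frac{ms^2+ds+\varkappa}{K}$, and writing $z_j^0=z_j(\ell_0,s)$, $z_j^-=z_j(\ell_0-\ell,s)$, $\beta=\lambda_1^2\lambda_2^2$, the matrix $M$ has rows Row 1: $\big(z_2^0,\; z_4^0,\; -z_2^-,\; -z_4^-\big)$; Row 2: $\big(vz_1^0-\beta z_3^0,\; vz_3^0+z_6^0,\; \beta z_3^- - vz_1^-,\; -z_6^- - vz_3^-\big)$; Row 3: $\big(v_1z_2^0+\beta z_4^0,\; v_1z_4^0-z_5^0,\; -\beta z_4^- - v_1z_2^-,\; z_5^- - v_1z_4^-\big)$; Row 4: $\big(z_1^0+v_2z_2^0,\; z_3^0+v_2z_4^0,\; -z_1^-,\; -z_3^-\big)$. *)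

From Stdlib Require Import Reals.
From Coquelicot Require Import Coquelicot.
Set Implicit Arguments.

Local Open Scope R_scope.

Definition Cexp (z : C) : C :=
  (exp (fst z) * cos (snd z), exp (fst z) * sin (snd z)).

Local Open Scope C_scope.

Definition Ccosh (z : C) : C := (Cexp z + Cexp (- z)) / RtoC 2.
Definition Csinh (z : C) : C := (Cexp z - Cexp (- z)) / RtoC 2.

(** principal square root: real part >= 0, argument in (-pi/2, pi/2] *)
Definition Csqrt (z : C) : C :=
  (sqrt ((Cmod z + fst z) / 2)%R,
   if Rle_dec 0 (snd z) then sqrt ((Cmod z - fst z) / 2)%R
   else (- sqrt ((Cmod z - fst z) / 2))%R).

Section Beam.
Variables (rho Irho EI K m kappa d : R) (s : C).

Definition a_ : C := (s * s / RtoC 2) * (RtoC rho / RtoC K + RtoC Irho / RtoC EI).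
Definition b_ : C := (RtoC K + RtoC Irho * s * s) * RtoC rho * s * s / (RtoC K * RtoC EI).
Definition lam1 : C := Csqrt (a_ + Csqrt (a_ * a_ - b_)).
Definition lam2 : C := Csqrt (a_ - Csqrt (a_ * a_ - b_)).

Definition z1 (x : R) : C :=
  lam1 * lam1 * Ccosh (lam2 * RtoC x) - lam2 * lam2 * Ccosh (lam1 * RtoC x).
Definition z2 (x : R) : C :=
  (lam1 * lam1 * lam1 * Csinh (lam2 * RtoC x) - lam2 * lam2 * lam2 * Csinh (lam1 * RtoC x))
  / (lam1 * lam2).
Definition z3 (x : R) : C := Ccosh (lam1 * RtoC x) - Ccosh (lam2 * RtoC x).
Definition z4 (x : R) : C :=
  (lam2 * Csinh (lam1 * RtoC x) - lam1 * Csinh (lam2 * RtoC x)) / (lam1 * lam2).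
Definition z5 (x : R) : C :=
  lam1 * Csinh (lam1 * RtoC x) - lam2 * Csinh (lam2 * RtoC x).
Definition z6 (x : R) : C :=
  lam1 * lam1 * Ccosh (lam1 * RtoC x) - lam2 * lam2 * Ccosh (lam2 * RtoC x).

Definition v_ : C := RtoC K / RtoC EI - RtoC rho * s * s / RtoC K.
Definition v1 : C := RtoC rho * s * s / RtoC K.
Definition v2 : C := (RtoC m * s * s + RtoC d * s + RtoC kappa) / RtoC K.
Definition beta : C := lam1 * lam1 * lam2 * lam2.

(** 4x4 matrices as functions of 1-based indices (i, j in {1,..,4}). *)
Definition mat4 := nat -> nat -> C.

Variables (l l0 : R).

Definition Mbeam : mat4 := fun i j =>
  let z10 := z1 l0 in let z20 := z2 l0 in let z30 := z3 l0 in
  let z40 := z4 l0 in let z50 := z5 l0 in let z60 := z6 l0 in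
  let z1m := z1 (l0 - l) in let z2m := z2 (l0 - l) in let z3m := z3 (l0 - l) in
  let z4m := z4 (l0 - l) in let z5m := z5 (l0 - l) in let z6m := z6 (l0 - l) in
  match i, j with
  | 1, 1 => z20 | 1, 2 => z40 | 1, 3 => - z2m | 1, 4 => - z4m
  | 2, 1 => v_ * z10 - beta * z30 | 2, 2 => v_ * z30 + z60
  | 2, 3 => beta * z3m - v_ * z1m | 2, 4 => - z6m - v_ * z3m
  | 3, 1 => v1 * z20 + beta * z40 | 3, 2 => v1 * z40 - z50
  | 3, 3 => - beta * z4m - v1 * z2m | 3, 4 => z5m - v1 * z4m
  | 4, 1 => z10 + v2 * z20 | 4, 2 => z30 + v2 * z40
  | 4, 3 => - z1m | 4, 4 => - z3m
  | _, _ => RtoC 0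
  end.

End Beam.

Definition mmul4 (A B : mat4) : mat4 := fun i j =>
  A i 1%nat * B 1%nat j + A i 2%nat * B 2%nat j + A i 3%nat * B 3%nat j + A i 4%nat * B 4%nat j.

Definition id4 : mat4 := fun i j => if Nat.eqb i j then RtoC 1 else RtoC 0.

Definition is_inverse4 (A N : mat4) : Prop :=
  forall i j : nat, (1 <= i <= 4)%nat -> (1 <= j <= 4)%nat ->
    mmul4 A N i j = id4 i j /\ mmul4 N A i j = id4 i j.

(** Derivatives of complex-valued functions of a real variable, taken within
    the closed interval [a, b] (one-sided at the endpoints). *)
Definition has_deriv_on (a b : R) (f df : R -> C) : Prop :=
  forall x, (a <= x <= b)%R ->
    filterlim (fun h : R => scal (/ h)%R (minus (f (x + h)%R) (f x)))
      (within (fun h : R => h <> 0%R /\ (a <= x + h <= b)%R) (locally 0%R))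
      (locally (df x)).

Definition cont_on (a b : R) (f : R -> C) : Prop :=
  forall x, (a <= x <= b)%R ->
    filterlim f (within (fun y : R => (a <= y <= b)%R) (locally x)) (locally (f x)).

Definition C2_on (a b : R) (f df ddf : R -> C) : Prop :=
  has_deriv_on a b f df /\ has_deriv_on a b df ddf /\ cont_on a b ddf.

From Stdlib Require Import Reals Lra Lia.
From Coquelicot Require Import Coquelicot.

(* On each of the two pieces [0, l0] and [l0, l] the system is a linear ODE whose
   characteristic roots are [+-lam1, +-lam2].  For each root [mu] a fixed linear combination
   of [(W, W', Psi, Psi')] behaves like [exp (mu x)] (a "modal integral"), and the four of
   them determine the state.  At the outer end of a piece [W] and [Psi'] vanish, so on that
   piece the state is a combination [c1 (z2, z1, ...) + c2 (z4, z3, ...)] of two modes,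
   measured from the outer end.  The four interface conditions at [l0] then read
   [M (c1, c2, c3, c4) = (0, 0, 0, U)], hence [c_i = M^-1_i4 U], and evaluating the modal
   representation at [lk] gives [H1] and [H2]. *)

Local Open Scope R_scope.

Definition Rderiv_within (a b : R) (g : R -> R) (x l : R) : Prop :=
  forall eps, 0 < eps -> exists del, 0 < del /\
    forall h, h <> 0 -> a <= x + h <= b -> Rabs h < del ->
      Rabs ((g (x + h) - g x) / h - l) < eps.

Lemma has_deriv_on_components a b f df x : has_deriv_on a b f df -> a <= x <= b ->
  Rderiv_within a b (fun y => fst (f y)) x (fst (df x)) /\
  Rderiv_within a b (fun y => snd (f y)) x (snd (df x)).
Proof.
intros Hf Hx.
assert (Hq : forall eps, 0 < eps -> exists del : posreal,
  forall h, h <> 0 -> a <= x + h <= b -> Rabs h < del ->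
    Rabs ((fst (f (x + h)) - fst (f x)) / h - fst (df x)) < eps /\
    Rabs ((snd (f (x + h)) - snd (f x)) / h - snd (df x)) < eps).
{ intros eps Heps.
  destruct (Hf x Hx _ (locally_ball (df x) (mkposreal eps Heps))) as [del Hd].
  exists del; intros h Hh Hab Hdel.
  assert (Hball : ball 0 del h).
  { change (Rabs (h - 0) < del). now rewrite Rminus_0_r. }
  destruct (Hd h Hball (conj Hh Hab)) as [H1 H2].
  change (Rabs (/ h * (fst (f (x + h)) - fst (f x)) - fst (df x)) < eps) in H1.
  change (Rabs (/ h * (snd (f (x + h)) - snd (f x)) - snd (df x)) < eps) in H2.
  unfold Rdiv; rewrite !(Rmult_comm _ (/ h)); auto. }
split; intros eps Heps; destruct (Hq eps Heps) as [del Hd];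
  exists del; (split; [apply cond_pos | intros h H1 H2 H3; apply Hd; auto]).
Qed.

Lemma Rderiv_within_derivable_pt_lim a b g x l :
  a < x < b -> Rderiv_within a b g x l -> derivable_pt_lim g x l.
Proof.
intros Hx Hg eps Heps.
destruct (Hg eps Heps) as [del [Hdel Hd]].
assert (Hpos : 0 < Rmin del (Rmin (x - a) (b - x))) by (repeat apply Rmin_pos; lra).
exists (mkposreal _ Hpos); simpl; intros h Hh Hlt.
pose proof (Rmin_l del (Rmin (x - a) (b - x))).
pose proof (Rmin_r del (Rmin (x - a) (b - x))).
pose proof (Rmin_l (x - a) (b - x)). pose proof (Rmin_r (x - a) (b - x)).
apply Hd; auto; [|lra].
revert Hlt; unfold Rabs; destruct Rcase_abs; lra.
Qed.

Lemma Rderiv_within_limit1_in a b g x l :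
  a <= x <= b -> Rderiv_within a b g x l -> limit1_in g (fun y => a <= y <= b) (g x) x.
Proof.
intros Hx Hg eps Heps.
destruct (Hg 1 Rlt_0_1) as [del [Hdel Hd]].
set (B := 1 + Rabs l).
assert (HB : 0 < B) by (unfold B; pose proof (Rabs_pos l); lra).
exists (Rmin del (eps / B)); split; [apply Rmin_pos; [lra | apply Rdiv_lt_0_compat; lra]|].
intros y [Hy Hyx]; simpl in *; unfold R_dist in *.
pose proof (Rmin_l del (eps / B)) as Hm1; pose proof (Rmin_r del (eps / B)) as Hm2.
destruct (Req_dec y x) as [->|Hyx']; [rewrite Rminus_eq_0, Rabs_R0; lra|].
set (h := y - x) in *.
assert (Hh : h <> 0) by (unfold h; lra).
replace y with (x + h) in Hy |- * by (unfold h; ring).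
set (u := (g (x + h) - g x) / h).
assert (Hu : Rabs u < B).
{ specialize (Hd h Hh Hy ltac:(lra)); fold u in Hd.
  pose proof (Rabs_triang (u - l) l); replace (u - l + l) with u in * by ring.
  unfold B; lra. }
replace (g (x + h) - g x) with (u * h) by (unfold u; field; auto).
rewrite Rabs_mult.
assert (Rabs h * B < eps).
{ assert (Hh' : Rabs h < eps / B) by lra.
  apply (Rmult_lt_compat_r B) in Hh'; [|lra].
  unfold Rdiv in Hh'; rewrite Rmult_assoc, Rinv_l in Hh'; lra. }
pose proof (Rabs_pos u); pose proof (Rabs_pos h); nra.
Qed.

Definition clamp (a b y : R) : R := Rmax a (Rmin b y).

Lemma clamp_id a b y : a <= y <= b -> clamp a b y = y.
Proof. intros Hy; unfold clamp; rewrite Rmin_right, Rmax_right; lra. Qed.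

Lemma clamp_in a b y : a <= b -> a <= clamp a b y <= b.
Proof. intros Hab; unfold clamp, Rmax, Rmin; repeat destruct Rle_dec; lra. Qed.

Lemma clamp_dist a b y z : a <= z <= b -> Rabs (clamp a b y - z) <= Rabs (y - z).
Proof. intros Hz; unfold clamp, Rmax, Rmin; repeat destruct Rle_dec; split_Rabs; lra. Qed.

Lemma null_derivative_closed (g : R -> R) a b : a < b ->
  (forall x, a < x < b -> derivable_pt_lim g x 0) ->
  (forall x, a <= x <= b -> limit1_in g (fun y => a <= y <= b) (g x) x) ->
  forall x, a <= x <= b -> g x = g a.
Proof.
intros Hab Hd Hc x Hx.
(* [MVT_gen] asks for two-sided continuity, so apply it to [g] composed with a clamp. *)
destruct (Req_dec x a) as [->|Hxa]; [reflexivity|].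
set (G := fun y => g (clamp a b y)).
destruct (MVT_gen G a x (fun _ => 0)) as [c [_ Hc']].
- rewrite Rmin_left, Rmax_right by lra; intros y Hy.
  apply (is_derive_ext_loc g); [|apply is_derive_Reals, Hd; lra].
  assert (Hpos : 0 < Rmin (y - a) (b - y)) by (apply Rmin_pos; lra).
  exists (mkposreal _ Hpos); intros z Hz; unfold G; rewrite clamp_id; [reflexivity|].
  change (Rabs (z - y) < Rmin (y - a) (b - y)) in Hz.
  pose proof (Rmin_l (y - a) (b - y)); pose proof (Rmin_r (y - a) (b - y)).
  revert Hz; unfold Rabs; destruct Rcase_abs; lra.
- rewrite Rmin_left, Rmax_right by lra; intros y Hy eps Heps.
  destruct (Hc y ltac:(lra) eps Heps) as [alp [Halp Hg]].
  exists alp; split; [exact Halp|]; intros z [_ Hz]; unfold G.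
  rewrite (clamp_id a b y) by lra.
  apply Hg; split; [apply clamp_in; lra|].
  eapply Rle_lt_trans; [apply clamp_dist; lra | exact Hz].
- unfold G in Hc'; rewrite !clamp_id in Hc' by lra; lra.
Qed.

Lemma continuity_pt_limit1_in f D x : continuity_pt f x -> limit1_in f D (f x) x.
Proof.
intros Hf eps Heps; destruct (Hf eps Heps) as [alp [Halp Hd]].
exists alp; split; [exact Halp|]; intros y [_ Hy].
destruct (Req_dec x y) as [<-|Hxy].
- simpl; unfold R_dist; rewrite Rminus_eq_0, Rabs_R0; lra.
- apply Hd; repeat split; assumption.
Qed.

Local Open Scope C_scope.

Definition Cderiv_open (a b : R) (f df : R -> C) : Prop :=
  forall x, (a < x < b)%R ->
    derivable_pt_lim (fun y => fst (f y)) x (fst (df x)) /\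
    derivable_pt_lim (fun y => snd (f y)) x (snd (df x)).

Definition Ccont_closed (a b : R) (f : R -> C) : Prop :=
  forall x, (a <= x <= b)%R ->
    limit1_in (fun y => fst (f y)) (fun y => a <= y <= b)%R (fst (f x)) x /\
    limit1_in (fun y => snd (f y)) (fun y => a <= y <= b)%R (snd (f x)) x.

Lemma has_deriv_on_Cderiv_open a b f df : has_deriv_on a b f df -> Cderiv_open a b f df.
Proof.
intros Hf x Hx; destruct (has_deriv_on_components _ _ _ _ x Hf ltac:(lra)) as [H1 H2].
split; eapply Rderiv_within_derivable_pt_lim; eauto.
Qed.

Lemma has_deriv_on_Ccont_closed a b f df : has_deriv_on a b f df -> Ccont_closed a b f.
Proof.
intros Hf x Hx; destruct (has_deriv_on_components _ _ _ _ x Hf Hx) as [H1 H2].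
split; eapply Rderiv_within_limit1_in; eauto.
Qed.

Lemma Cderiv_open_const a b (c : C) : Cderiv_open a b (fun _ => c) (fun _ => 0).
Proof. split; apply derivable_pt_lim_const. Qed.

Lemma Cderiv_open_plus a b f df g dg : Cderiv_open a b f df -> Cderiv_open a b g dg ->
  Cderiv_open a b (fun y => f y + g y) (fun y => df y + dg y).
Proof.
intros Hf Hg x Hx; destruct (Hf x Hx), (Hg x Hx).
split; apply derivable_pt_lim_plus; assumption.
Qed.

Lemma Cderiv_open_mult a b f df g dg : Cderiv_open a b f df -> Cderiv_open a b g dg ->
  Cderiv_open a b (fun y => f y * g y) (fun y => df y * g y + f y * dg y).
Proof.
intros Hf Hg x Hx; destruct (Hf x Hx) as [F1 F2], (Hg x Hx) as [G1 G2].
split.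
- refine (eq_ind _ (derivable_pt_lim _ x) (derivable_pt_lim_minus _ _ x _ _
    (derivable_pt_lim_mult _ _ x _ _ F1 G1) (derivable_pt_lim_mult _ _ x _ _ F2 G2)) _ _).
  simpl; ring.
- refine (eq_ind _ (derivable_pt_lim _ x) (derivable_pt_lim_plus _ _ x _ _
    (derivable_pt_lim_mult _ _ x _ _ F1 G2) (derivable_pt_lim_mult _ _ x _ _ F2 G1)) _ _).
  simpl; ring.
Qed.

Lemma Ccont_closed_const a b (c : C) : Ccont_closed a b (fun _ => c).
Proof.
intros x _; split; intros eps Heps; exists 1%R;
  (split; [lra | intros y _; simpl; unfold R_dist; rewrite Rminus_eq_0, Rabs_R0; lra]).
Qed.

Lemma Ccont_closed_plus a b f g : Ccont_closed a b f -> Ccont_closed a b g ->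
  Ccont_closed a b (fun y => f y + g y).
Proof.
intros Hf Hg x Hx; destruct (Hf x Hx), (Hg x Hx).
split; apply limit_plus; assumption.
Qed.

Lemma Ccont_closed_mult a b f g : Ccont_closed a b f -> Ccont_closed a b g ->
  Ccont_closed a b (fun y => f y * g y).
Proof.
intros Hf Hg x Hx; destruct (Hf x Hx), (Hg x Hx).
split; [apply limit_minus | apply limit_plus]; apply limit_mul; assumption.
Qed.

Lemma Cexp_mul_RtoC mu y : Cexp (mu * RtoC y) =
  (exp (fst mu * y) * cos (snd mu * y), exp (fst mu * y) * sin (snd mu * y))%R.
Proof. destruct mu as [m1 m2]; unfold Cexp; simpl; f_equal; f_equal; f_equal; ring. Qed.

Lemma Cderiv_open_Cexp a b mu :
  Cderiv_open a b (fun y => Cexp (mu * RtoC y)) (fun y => mu * Cexp (mu * RtoC y)).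
Proof.
intros x _; rewrite Cexp_mul_RtoC; destruct mu as [m1 m2].
split; apply is_derive_Reals;
  (eapply is_derive_ext; [intro t; rewrite Cexp_mul_RtoC; reflexivity|]);
  simpl; auto_derive; auto; ring.
Qed.

Lemma Ccont_closed_Cexp a b mu : Ccont_closed a b (fun y => Cexp (mu * RtoC y)).
Proof.
intros x _.
destruct (Cderiv_open_Cexp (x - 1) (x + 1) mu x ltac:(lra)) as [H1 H2].
split; apply continuity_pt_limit1_in, derivable_continuous_pt; eexists; eassumption.
Qed.

Lemma Cderiv_open_null_const a b F dF : (a < b)%R ->
  Cderiv_open a b F dF -> (forall x, (a < x < b)%R -> dF x = 0) -> Ccont_closed a b F ->
  forall x, (a <= x <= b)%R -> F x = F a.
Proof.
intros Hab HD H0 HC x Hx.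
apply injective_projections;
  [apply (null_derivative_closed (fun y => fst (F y)) a b Hab) |
   apply (null_derivative_closed (fun y => snd (F y)) a b Hab)]; auto;
  intros y Hy; try (apply HC; exact Hy);
  destruct (HD y Hy) as [D1 D2]; rewrite (H0 y Hy) in D1, D2; assumption.
Qed.

Lemma Cexp_add z w : Cexp (z + w) = Cexp z * Cexp w.
Proof.
destruct z as [z1 z2], w as [w1 w2]; unfold Cexp, Cmult, Cplus; simpl.
rewrite exp_plus, cos_plus, sin_plus; f_equal; ring.
Qed.

Lemma Cexp_0 : Cexp 0 = 1.
Proof. unfold Cexp; simpl; rewrite exp_0, cos_0, sin_0; apply injective_projections; simpl; ring. Qed.

Lemma RtoC_neq0 x : x <> 0%R -> RtoC x <> 0.
Proof. intros Hx E; apply Hx; exact (f_equal fst E). Qed.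

Lemma two_neq0 : RtoC 2 <> 0.
Proof. apply RtoC_neq0; lra. Qed.

Lemma Cexp_cosh_sinh z : Cexp z = Ccosh z + Csinh z.
Proof. unfold Ccosh, Csinh; field; exact two_neq0. Qed.

Lemma Cexp_opp_cosh_sinh z : Cexp (- z) = Ccosh z - Csinh z.
Proof. unfold Ccosh, Csinh; replace (- - z) with z by ring; field; exact two_neq0. Qed.

(* On solutions of [W'' = Psi' + r W], [Psi'' = - k W' + g Psi] the derivative of this
   combination of [(W, W', Psi, Psi')] is [mu] times itself whenever [mu] is a root of
   the characteristic polynomial [mu^4 - (r + g - k) mu^2 + r g]. *)
Definition modal_integral (r g mu W P S Q : C) : C :=
  r * (mu * mu - g) * W + mu * (mu * mu - g) * P + mu * g * S + mu * mu * Q.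

Section ModalIntegral.

Variables (a b : R) (W dW ddW S dS ddS : R -> C) (r g k : C).
Hypotheses (Hab : (a < b)%R) (HW : C2_on a b W dW ddW) (HS : C2_on a b S dS ddS)
  (Hode : forall x, (a < x < b)%R ->
     ddW x = dS x + r * W x /\ ddS x = - k * dW x + g * S x).

Lemma modal_integral_exp mu x0 :
  mu * mu * mu * mu - mu * mu * (r + g - k) + r * g = 0 ->
  (a <= x0 <= b)%R -> forall x, (a <= x <= b)%R ->
  modal_integral r g mu (W x) (dW x) (S x) (dS x) =
  Cexp (mu * RtoC (x - x0)) * modal_integral r g mu (W x0) (dW x0) (S x0) (dS x0).
Proof.
intros Hchar Hx0 x Hx.
destruct HW as [HW1 [HW2 _]], HS as [HS1 [HS2 _]].
set (L := fun y => modal_integral r g mu (W y) (dW y) (S y) (dS y)).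
set (F := fun y => Cexp (- mu * RtoC y) * L y).
assert (HF : forall y, (a <= y <= b)%R -> F y = F a).
{ eapply Cderiv_open_null_const; [exact Hab | | | ].
  - unfold F, L, modal_integral; apply Cderiv_open_mult; [apply Cderiv_open_Cexp|].
    repeat apply Cderiv_open_plus;
      (apply Cderiv_open_mult; [apply Cderiv_open_const | apply has_deriv_on_Cderiv_open; eauto]).
  - intros y Hy; cbv beta; destruct (Hode y Hy) as [-> ->].
    transitivity (- (Cexp (- mu * RtoC y) * dW y) *
      (mu * mu * mu * mu - mu * mu * (r + g - k) + r * g)); [ring|].
    rewrite Hchar; ring.
  - unfold F, L, modal_integral; apply Ccont_closed_mult; [apply Ccont_closed_Cexp|].
    repeat apply Ccont_closed_plus;
      (apply Ccont_closed_mult; [apply Ccont_closed_const | eapply has_deriv_on_Ccont_closed; eauto]). }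
assert (Hexp : forall y, Cexp (mu * RtoC y) * F y = L y).
{ intro y; unfold F; rewrite Cmult_assoc, <- Cexp_add.
  replace (mu * RtoC y + - mu * RtoC y) with (RtoC 0) by ring.
  rewrite Cexp_0; ring. }
change (L x = Cexp (mu * RtoC (x - x0)) * L x0).
rewrite <- (Hexp x), <- (Hexp x0), (HF x Hx), (HF x0 Hx0), Cmult_assoc, <- Cexp_add.
f_equal; f_equal; rewrite RtoC_minus; ring.
Qed.

End ModalIntegral.

Lemma Csqrt_sqr z : Csqrt z * Csqrt z = z.
Proof.
destruct z as [x y]; unfold Csqrt; simpl fst; simpl snd.
set (M := Cmod (x, y)).
assert (HM : (M * M = x * x + y * y)%R).
{ unfold M, Cmod; simpl; rewrite sqrt_sqrt; [ring | nra]. }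
assert (HM0 : (0 <= M)%R) by apply Cmod_ge_0.
assert (HA : (sqrt ((M + x) / 2) * sqrt ((M + x) / 2) = (M + x) / 2)%R) by (apply sqrt_sqrt; nra).
assert (HB : (sqrt ((M - x) / 2) * sqrt ((M - x) / 2) = (M - x) / 2)%R) by (apply sqrt_sqrt; nra).
assert (HAB : (sqrt ((M + x) / 2) * sqrt ((M - x) / 2) = Rabs y / 2)%R).
{ rewrite <- sqrt_mult by nra.
  replace ((M + x) / 2 * ((M - x) / 2))%R with (Rabs y / 2 * (Rabs y / 2))%R.
  - apply sqrt_square; pose proof (Rabs_pos y); lra.
  - assert (Ey : (Rabs y * Rabs y = y * y)%R) by (rewrite <- Rabs_mult; apply Rabs_pos_eq; nra).
    nra. }
destruct (Rle_dec 0 y); unfold Cmult; apply injective_projections; simpl.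
- rewrite HA, HB; field.
- rewrite (Rmult_comm (sqrt ((M - x) / 2))), HAB, Rabs_right by lra; field.
- rewrite Rmult_opp_opp, HA, HB; field.
- rewrite Ropp_mult_distr_r_reverse, Ropp_mult_distr_l_reverse,
    (Rmult_comm (sqrt ((M - x) / 2))), HAB, Rabs_left by lra; field.
Qed.

Definition mvmul4 (A : mat4) (c : nat -> C) (i : nat) : C :=
  A i 1%nat * c 1%nat + A i 2%nat * c 2%nat + A i 3%nat * c 3%nat + A i 4%nat * c 4%nat.

Definition vec4 (x1 x2 x3 x4 : C) : nat -> C := fun i =>
  match i with 1%nat => x1 | 2%nat => x2 | 3%nat => x3 | 4%nat => x4 | _ => 0 end.

Lemma mvmul4_mmul4 (A B : mat4) (c : nat -> C) i :
  mvmul4 (mmul4 A B) c i = mvmul4 A (mvmul4 B c) i.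
Proof. unfold mvmul4, mmul4; ring. Qed.

Lemma is_inverse4_solve (A N : mat4) (c : nat -> C) (U : C) : is_inverse4 A N ->
  (forall i, (1 <= i <= 4)%nat -> mvmul4 A c i = id4 i 4%nat * U) ->
  forall i, (1 <= i <= 4)%nat -> c i = N i 4%nat * U.
Proof.
intros Hinv Hrow i Hi.
assert (HNA : forall j, (1 <= j <= 4)%nat -> mmul4 N A i j = id4 i j)
  by (intros j Hj; exact (proj2 (Hinv i j Hi Hj))).
transitivity (mvmul4 (mmul4 N A) c i).
- unfold mvmul4; rewrite !HNA by lia; unfold id4.
  destruct i as [|[|[|[|[|i]]]]]; try lia; simpl; ring.
- rewrite mvmul4_mmul4; unfold mvmul4 at 1; rewrite !Hrow by lia; unfold id4; simpl; ring.
Qed.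

Section Beam.

Variables (rho Irho EI K : R) (s : C).
Hypotheses (HK : (0 < K)%R) (HEI : (0 < EI)%R) (Hb : b_ rho Irho EI K s <> 0)
  (Hab : a_ rho Irho EI K s * a_ rho Irho EI K s <> b_ rho Irho EI K s).

Let p := lam1 rho Irho EI K s.
Let q := lam2 rho Irho EI K s.
Let r := v1 rho K s.
Let g := (RtoC K + RtoC Irho * s * s) / RtoC EI.
Let k := RtoC K / RtoC EI.
Let Z1 := z1 rho Irho EI K s.
Let Z2 := z2 rho Irho EI K s.
Let Z3 := z3 rho Irho EI K s.
Let Z4 := z4 rho Irho EI K s.
Let Z5 := z5 rho Irho EI K s.
Let Z6 := z6 rho Irho EI K s.
Let vb := v_ rho EI K s.
Let bt := beta rho Irho EI K s.

Lemma K_neq0 : RtoC K <> 0.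
Proof. apply RtoC_neq0; lra. Qed.

Lemma EI_neq0 : RtoC EI <> 0.
Proof. apply RtoC_neq0; lra. Qed.

Lemma lam_sqr_add : p * p + q * q = RtoC 2 * a_ rho Irho EI K s.
Proof. unfold p, q, lam1, lam2; rewrite !Csqrt_sqr; ring. Qed.

Lemma beta_eq_b : p * p * q * q = b_ rho Irho EI K s.
Proof.
transitivity ((p * p) * (q * q)); [ring|]; unfold p, q, lam1, lam2; rewrite !Csqrt_sqr.
set (w := Csqrt _); transitivity (a_ rho Irho EI K s * a_ rho Irho EI K s - w * w); [ring|].
unfold w; rewrite Csqrt_sqr; ring.
Qed.

Lemma lam_sqr_sub_neq0 : p * p - q * q <> 0.
Proof.
unfold p, q, lam1, lam2; rewrite !Csqrt_sqr; intro E; apply Hab.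
set (w := Csqrt _) in E.
assert (Hw : w = 0).
{ replace w with ((a_ rho Irho EI K s + w - (a_ rho Irho EI K s - w)) / RtoC 2)
    by (field; exact two_neq0).
  rewrite E; field; exact two_neq0. }
pose proof (Csqrt_sqr (a_ rho Irho EI K s * a_ rho Irho EI K s - b_ rho Irho EI K s)) as Hww.
fold w in Hww; rewrite Hw in Hww.
transitivity (a_ rho Irho EI K s * a_ rho Irho EI K s - b_ rho Irho EI K s + b_ rho Irho EI K s);
  [ring | rewrite <- Hww; ring].
Qed.

Lemma b_eq_r_mul_g : b_ rho Irho EI K s = r * g.
Proof. unfold b_, r, v1, g; field; split; [exact EI_neq0 | exact K_neq0]. Qed.

Lemma lam1_neq0 : p <> 0.
Proof. intro E; apply Hb; rewrite <- beta_eq_b; fold p; rewrite E; ring. Qed.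

Lemma lam2_neq0 : q <> 0.
Proof. intro E; apply Hb; rewrite <- beta_eq_b; fold q; rewrite E; ring. Qed.

Lemma r_neq0 : r <> 0.
Proof. intro E; apply Hb; rewrite b_eq_r_mul_g, E; ring. Qed.

Lemma g_neq0 : g <> 0.
Proof. intro E; apply Hb; rewrite b_eq_r_mul_g, E; ring. Qed.

Lemma g_eq : g = p * p * q * q / r.
Proof. rewrite beta_eq_b, b_eq_r_mul_g; field; exact r_neq0. Qed.

Lemma k_eq : k = r + g - p * p - q * q.
Proof.
transitivity (r + g - (p * p + q * q)); [|ring]; rewrite lam_sqr_add.
unfold a_, r, v1, g, k; field; split; [exact EI_neq0 | exact K_neq0].
Qed.

Lemma lam_char_root mu : mu = p \/ mu = - p \/ mu = q \/ mu = - q ->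
  mu * mu * mu * mu - mu * mu * (r + g - k) + r * g = 0.
Proof.
intros Hmu; rewrite k_eq, g_eq.
destruct Hmu as [-> | [-> | [-> | ->]]]; field; exact r_neq0.
Qed.

(* The state [(W, W', Psi, Psi')] at distance [t] from the outer end of a piece, with mode
   coefficients [c1, c2]; its four lines are, up to sign and the factors [K] and [K g], the
   row patterns of the matrix [M]. *)
Definition modal_state (c1 c2 : C) (t : R) (Wv dWv Psiv dPsiv : C) : Prop :=
  RtoC K * Wv = c1 * Z2 t + c2 * Z4 t /\
  RtoC K * dWv = c1 * Z1 t + c2 * Z3 t /\
  RtoC K * g * Psiv = c1 * (vb * Z1 t - bt * Z3 t) + c2 * (vb * Z3 t + Z6 t) /\
  RtoC K * dPsiv = - (c1 * (r * Z2 t + bt * Z4 t) + c2 * (r * Z4 t - Z5 t)).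

Lemma state_of_modal_integrals (P0 S0 : C) : exists c1 c2, forall (t : R) (W P S Q : C),
  (forall mu, mu = p \/ mu = - p \/ mu = q \/ mu = - q ->
     modal_integral r g mu W P S Q = Cexp (mu * RtoC t) * modal_integral r g mu 0 P0 S0 0) ->
  modal_state c1 c2 t W P S Q.
Proof.
pose proof lam1_neq0; pose proof lam2_neq0; pose proof r_neq0; pose proof g_neq0.
pose proof K_neq0; pose proof two_neq0; pose proof lam_sqr_sub_neq0.
set (D := p * p - q * q) in *.
exists (RtoC K * P0 / D), (RtoC K * g * S0 / D - (k - r) * (RtoC K * P0 / D)).
intros t W P S Q HL.
pose proof (HL p ltac:(tauto)) as Ep; pose proof (HL (- p) ltac:(tauto)) as Em.
pose proof (HL q ltac:(tauto)) as Eq; pose proof (HL (- q) ltac:(tauto)) as Eqm.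
rewrite Cexp_cosh_sinh in Ep, Eq.
replace (- p * RtoC t) with (- (p * RtoC t)) in Em by ring.
replace (- q * RtoC t) with (- (q * RtoC t)) in Eqm by ring.
rewrite Cexp_opp_cosh_sinh in Em, Eqm.
set (chp := Ccosh (p * RtoC t)) in *; set (shp := Csinh (p * RtoC t)) in *.
set (chq := Ccosh (q * RtoC t)) in *; set (shq := Csinh (q * RtoC t)) in *.
set (Lp := modal_integral r g p 0 P0 S0 0) in *; set (Lm := modal_integral r g (- p) 0 P0 S0 0) in *.
set (Lq := modal_integral r g q 0 P0 S0 0) in *; set (Lqm := modal_integral r g (- q) 0 P0 S0 0) in *.
assert (EW : W = (q * q * ((chp + shp) * Lp + (chp - shp) * Lm)
                  - p * p * ((chq + shq) * Lq + (chq - shq) * Lqm)) / (RtoC 2 * r * g * D)).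
{ rewrite <- Ep, <- Em, <- Eq, <- Eqm; unfold D, modal_integral; field; auto. }
assert (EQ : Q = ((q * q - g) * ((chp + shp) * Lp + (chp - shp) * Lm)
                  - (p * p - g) * ((chq + shq) * Lq + (chq - shq) * Lqm)) / (RtoC 2 * g * - D)).
{ rewrite <- Ep, <- Em, <- Eq, <- Eqm; unfold D, modal_integral; field; auto. }
assert (EP : P = (((chp + shp) * Lp - (chp - shp) * Lm) / p
                  - ((chq + shq) * Lq - (chq - shq) * Lqm) / q) / (RtoC 2 * D)).
{ rewrite <- Ep, <- Em, <- Eq, <- Eqm; unfold D, modal_integral; field; auto. }
assert (ES : S = ((q * q - g) * ((chp + shp) * Lp - (chp - shp) * Lm) / p
                  - (p * p - g) * ((chq + shq) * Lq - (chq - shq) * Lqm) / q) / (RtoC 2 * g * - D)).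
{ rewrite <- Ep, <- Em, <- Eq, <- Eqm; unfold D, modal_integral; field; auto. }
unfold modal_state; rewrite EW, EQ, EP, ES; clear EW EQ EP ES Ep Em Eq Eqm HL.
assert (Hvb : vb = k - r) by (unfold vb, v_, k, r, v1; ring).
rewrite Hvb; unfold Z1, Z2, Z3, Z4, Z5, Z6, z1, z2, z3, z4, z5, z6, bt, beta; fold p q chp shp chq shq.
unfold Lp, Lm, Lq, Lqm, D, modal_integral; rewrite k_eq, g_eq.
repeat split; field; auto.
Qed.

Lemma beam_piece_solution (x1 x2 x0 : R) (W dW ddW Psi dPsi ddPsi : R -> C) :
  (x1 < x2)%R -> (x1 <= x0 <= x2)%R ->
  C2_on x1 x2 W dW ddW -> C2_on x1 x2 Psi dPsi ddPsi ->
  (forall x, (x1 < x < x2)%R ->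
     RtoC K * (ddW x - dPsi x) - RtoC rho * s * s * W x = 0 /\
     RtoC EI * ddPsi x + RtoC K * (dW x - Psi x) - RtoC Irho * s * s * Psi x = 0) ->
  W x0 = 0 -> dPsi x0 = 0 ->
  exists c1 c2, forall x, (x1 <= x <= x2)%R ->
    modal_state c1 c2 (x - x0) (W x) (dW x) (Psi x) (dPsi x).
Proof.
intros Hx12 Hx0 HW HPsi Hode HW0 HPsi0.
pose proof K_neq0; pose proof EI_neq0.
assert (Hode' : forall x, (x1 < x < x2)%R ->
          ddW x = dPsi x + r * W x /\ ddPsi x = - k * dW x + g * Psi x).
{ intros x Hx; destruct (Hode x Hx) as [E1 E2]; split.
  - transitivity (dPsi x + r * W x + (RtoC K * (ddW x - dPsi x) - RtoC rho * s * s * W x) / RtoC K).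
    + unfold r, v1; field; auto.
    + rewrite E1; field; auto.
  - transitivity (- k * dW x + g * Psi x
      + (RtoC EI * ddPsi x + RtoC K * (dW x - Psi x) - RtoC Irho * s * s * Psi x) / RtoC EI).
    + unfold k, g; field; auto.
    + rewrite E2; field; auto. }
destruct (state_of_modal_integrals (dW x0) (Psi x0)) as [c1 [c2 Hc]].
exists c1, c2; intros x Hx; apply Hc; intros mu Hmu.
rewrite (modal_integral_exp x1 x2 W dW ddW Psi dPsi ddPsi r g k Hx12 HW HPsi Hode' mu x0
           (lam_char_root mu Hmu) Hx0 x Hx), HW0, HPsi0.
reflexivity.
Qed.

Lemma interface_system (m kappa d l l0 : R)
    (U Wv Psiv dW1 dW2 dPsi1 dPsi2 c1 c2 c3 c4 : C) :
  modal_state c1 c2 l0 Wv dW1 Psiv dPsi1 ->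
  modal_state c3 c4 (l0 - l) Wv dW2 Psiv dPsi2 ->
  dPsi1 = dPsi2 ->
  RtoC K * (dW1 - dW2) + (RtoC m * s * s + RtoC kappa + RtoC d * s) * Wv = U ->
  forall i, (1 <= i <= 4)%nat ->
    mvmul4 (Mbeam rho Irho EI K m kappa d s l l0) (vec4 c1 c2 c3 c4) i = id4 i 4%nat * U.
Proof.
intros [HW1 [HdW1 [HPsi1 HdPsi1]]] [HW2 [HdW2 [HPsi2 HdPsi2]]] HdPsi HU i Hi.
pose proof K_neq0.
destruct i as [|[|[|[|[|i]]]]]; try lia;
  cbv beta iota zeta delta [mvmul4 Mbeam vec4 id4 Nat.eqb]; fold Z1 Z2 Z3 Z4 Z5 Z6 vb bt r.
- transitivity ((c1 * Z2 l0 + c2 * Z4 l0) - (c3 * Z2 (l0 - l) + c4 * Z4 (l0 - l))); [ring|].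
  rewrite <- HW1, <- HW2; ring.
- transitivity ((c1 * (vb * Z1 l0 - bt * Z3 l0) + c2 * (vb * Z3 l0 + Z6 l0))
    - (c3 * (vb * Z1 (l0 - l) - bt * Z3 (l0 - l)) + c4 * (vb * Z3 (l0 - l) + Z6 (l0 - l))));
    [ring|].
  rewrite <- HPsi1, <- HPsi2; ring.
- transitivity (- (- (c1 * (r * Z2 l0 + bt * Z4 l0) + c2 * (r * Z4 l0 - Z5 l0)))
    + - (c3 * (r * Z2 (l0 - l) + bt * Z4 (l0 - l)) + c4 * (r * Z4 (l0 - l) - Z5 (l0 - l))));
    [ring|].
  rewrite <- HdPsi1, <- HdPsi2, HdPsi; ring.
- transitivity ((c1 * Z1 l0 + c2 * Z3 l0) - (c3 * Z1 (l0 - l) + c4 * Z3 (l0 - l))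
    + v2 K m kappa d s * (c1 * Z2 l0 + c2 * Z4 l0)); [ring|].
  rewrite <- HdW1, <- HdW2, <- HW1, <- HU; unfold v2; field; assumption.
Qed.

Lemma transfer_functions (N1 N2 U c1 c2 Wv dWv Psiv dPsiv : C) (t : R) :
  modal_state c1 c2 t Wv dWv Psiv dPsiv -> c1 = N1 * U -> c2 = N2 * U ->
  Wv = (Z2 t * N1 + Z4 t * N2) / RtoC K * U /\
  dPsiv = ((- bt * RtoC K * Z4 t - RtoC rho * s * s * Z2 t) * N1
           + (RtoC K * Z5 t - RtoC rho * s * s * Z4 t) * N2) / (RtoC K * RtoC K) * U.
Proof.
intros [HW [_ [_ HdPsi]]] -> ->; pose proof K_neq0.
split.
- transitivity (RtoC K * Wv / RtoC K); [field; assumption|].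
  rewrite HW; field; assumption.
- transitivity (RtoC K * dPsiv / RtoC K); [field; assumption|].
  rewrite HdPsi; unfold r, v1; field; assumption.
Qed.

End Beam.

Theorem proposition1
  (l l0 rho Irho EI K m kappa d : R) (s U : C)
  (W Psi dW1 ddW1 dW2 ddW2 dPsi1 ddPsi1 dPsi2 ddPsi2 : R -> C)
  (Minv : mat4) :
  (0 < l)%R -> (0 < l0 < l)%R -> (0 < rho)%R -> (0 < Irho)%R -> (0 < EI)%R ->
  (0 < K)%R -> (0 < m)%R -> (0 < kappa)%R -> (0 < d)%R ->
  RtoC K + RtoC Irho * s * s <> RtoC 0 ->
  b_ rho Irho EI K s <> RtoC 0 ->
  a_ rho Irho EI K s * a_ rho Irho EI K s <> b_ rho Irho EI K s ->
  is_inverse4 (Mbeam rho Irho EI K m kappa d s l l0) Minv ->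
  C2_on 0 l0 W dW1 ddW1 -> C2_on l0 l W dW2 ddW2 ->
  C2_on 0 l0 Psi dPsi1 ddPsi1 -> C2_on l0 l Psi dPsi2 ddPsi2 ->
  (forall x, (0 < x < l0)%R ->
     RtoC K * (ddW1 x - dPsi1 x) - RtoC rho * s * s * W x = RtoC 0 /\
     RtoC EI * ddPsi1 x + RtoC K * (dW1 x - Psi x) - RtoC Irho * s * s * Psi x = RtoC 0) ->
  (forall x, (l0 < x < l)%R ->
     RtoC K * (ddW2 x - dPsi2 x) - RtoC rho * s * s * W x = RtoC 0 /\
     RtoC EI * ddPsi2 x + RtoC K * (dW2 x - Psi x) - RtoC Irho * s * s * Psi x = RtoC 0) ->
  W 0%R = RtoC 0 -> W l = RtoC 0 -> dPsi1 0%R = RtoC 0 -> dPsi2 l = RtoC 0 ->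
  (* continuity of W and Psi at l0 is built in: each is a single function *)
  dPsi1 l0 = dPsi2 l0 ->
  RtoC K * (dW1 l0 - dW2 l0) + (RtoC m * s * s + RtoC kappa + RtoC d * s) * W l0 = U ->
  forall lk : R,
    ((0 <= lk <= l0)%R ->
       W lk = (z2 rho Irho EI K s lk * Minv 1%nat 4%nat
               + z4 rho Irho EI K s lk * Minv 2%nat 4%nat) / RtoC K * U /\
       dPsi1 lk =
         ((- beta rho Irho EI K s * RtoC K * z4 rho Irho EI K s lk
             - RtoC rho * s * s * z2 rho Irho EI K s lk) * Minv 1%nat 4%nat
          + (RtoC K * z5 rho Irho EI K s lk
             - RtoC rho * s * s * z4 rho Irho EI K s lk) * Minv 2%nat 4%nat)
         / (RtoC K * RtoC K) * U) /\
    ((l0 < lk <= l)%R ->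
       W lk = (z2 rho Irho EI K s (lk - l) * Minv 3%nat 4%nat
               + z4 rho Irho EI K s (lk - l) * Minv 4%nat 4%nat) / RtoC K * U /\
       dPsi2 lk =
         ((- beta rho Irho EI K s * RtoC K * z4 rho Irho EI K s (lk - l)
             - RtoC rho * s * s * z2 rho Irho EI K s (lk - l)) * Minv 3%nat 4%nat
          + (RtoC K * z5 rho Irho EI K s (lk - l)
             - RtoC rho * s * s * z4 rho Irho EI K s (lk - l)) * Minv 4%nat 4%nat)
         / (RtoC K * RtoC K) * U).
Proof.
intros Hl Hl0 _ _ HEI HK _ _ _ _ Hb Hab Hinv HW1 HW2 HPsi1 HPsi2 Hode1 Hode2
  HW0 HWl HdPsi0 HdPsil HdPsil0 HU lk.
destruct (beam_piece_solution rho Irho EI K s HK HEI Hb Hab 0 l0 0 W dW1 ddW1 Psi dPsi1 ddPsi1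
            ltac:(lra) ltac:(lra) HW1 HPsi1 Hode1 HW0 HdPsi0) as [c1 [c2 HL]].
destruct (beam_piece_solution rho Irho EI K s HK HEI Hb Hab l0 l l W dW2 ddW2 Psi dPsi2 ddPsi2
            ltac:(lra) ltac:(lra) HW2 HPsi2 Hode2 HWl HdPsil) as [c3 [c4 HR]].
assert (HLl0 := HL l0 ltac:(lra)); rewrite Rminus_0_r in HLl0.
pose proof (is_inverse4_solve _ _ _ _ Hinv
  (interface_system rho Irho EI K s HK m kappa d l l0 _ _ _ _ _ _ _ _ _ _ _
     HLl0 (HR l0 ltac:(lra)) HdPsil0 HU)) as Hc.
split; intro Hlk.
- assert (HLk := HL lk Hlk); rewrite Rminus_0_r in HLk.
  exact (transfer_functions rho Irho EI K s HK _ _ _ _ _ _ _ _ _ _ HLk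
           (Hc 1%nat ltac:(lia)) (Hc 2%nat ltac:(lia))).
- exact (transfer_functions rho Irho EI K s HK _ _ _ _ _ _ _ _ _ _ (HR lk ltac:(lra))
           (Hc 3%nat ltac:(lia)) (Hc 4%nat ltac:(lia))).
Qed.
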